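(* Let $P$ and $Q$ be partial orders on the same finite ground set, and suppose the comparability graph of $P$ contains the comparability graph of $Q$ as a subgraph. Then $e(Q)\ge e(P)$, and if the containment is proper then $e(Q)>e(P)$.
   Context: The comparability graph of a poset is the simple graph on its ground set in which two distinct elements are adjacent iff they are comparable. $e(\cdot)$ denotes the number of linear extensions (order-preserving bijections from the ground set of size $n$ onto $[n]$). *)

From mathcomp Require Import all_boot.
Set Implicit Arguments. Unset Strict Implicit. Unset Printing Implicit Defensive.

Definition is_partial_order {T : finType} (P : rel T) : Prop :=
  reflexive P /\ antisymmetric P /\ transitive P.

Definition comparable_in {T : finType} (P : rel T) (x y : T) : bool :=
  (x != y) && (P x y || P y x).

Definition is_linext {T : finType} (P : rel T) (f : {ffun T -> 'I_#|T|}) : bool :=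
  injectiveb f && [forall x, forall y, P x y ==> (f x <= f y)].

Definition num_linext {T : finType} (P : rel T) : nat :=
  #|[set f : {ffun T -> 'I_#|T|} | is_linext P f]|.

From mathcomp Require Import all_boot zify.
Set Implicit Arguments. Unset Strict Implicit. Unset Printing Implicit Defensive.

(* Stanley's transfer map [f |-> (x |-> f x - max_(y < x) f y)] is a bijection
   between the strictly order-preserving maps T -> {1..N} and the lattice points of
   the N-dilated chain polytope {g > 0 | g sums to at most N on every chain}. The
   chain polytope only sees chains, i.e. the comparability graph, and it grows when
   chains disappear, so the strict maps of P are at most as many as those of Q.
   Injective strict maps number e(R) times the number of increasing n-sequences in
   {1..N}, while the non-injective ones are of lower order in N; for N large this
   gives e(P) <= e(Q). If a, b are comparable in P but not in Q, one exhibits a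
   family of order N^n chain-polytope points of Q that are not points for P, which
   makes the inequality strict. *)

Section ChainTransfer.
Variables (T : finType) (R : rel T).
Hypotheses (Rrefl : reflexive R) (Ranti : antisymmetric R) (Rtrans : transitive R).
Variable N : nat.

Definition strict_maps := [set f : {ffun T -> 'I_N.+1} | [forall x, 0 < f x] &&
  [forall x, forall y, (x != y) && R x y ==> (f x < f y)]].

Definition is_chain (C : {set T}) :=
  [forall x in C, forall y in C, [|| x == y, R x y | R y x]].

Definition chain_maps := [set g : {ffun T -> 'I_N.+1} | [forall x, 0 < g x] &&
  [forall C : {set T}, is_chain C ==> (\sum_(x in C) g x <= N)]].

Definition max_below (f : T -> nat) x := \max_(y | (y != x) && R y x) f y.

Definition transfer (f : {ffun T -> 'I_N.+1}) : {ffun T -> 'I_N.+1} :=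
  [ffun x => inord (f x - max_below (fun y => f y) x)].

Definition top_chain x C := [&& is_chain C, x \in C & [forall z in C, R z x]].

Definition max_chain_sum (g : {ffun T -> 'I_N.+1}) x :=
  \max_(C | top_chain x C) \sum_(z in C) (g z : nat).

Definition untransfer (g : {ffun T -> 'I_N.+1}) : {ffun T -> 'I_N.+1} :=
  [ffun x => inord (max_chain_sum g x)].

Lemma strict_mapsP (f : {ffun T -> 'I_N.+1}) :
  reflect ((forall x, 0 < f x) /\ (forall x y, x != y -> R x y -> f x < f y))
          (f \in strict_maps).
Proof.
rewrite inE; apply: (iffP andP) => [[/forallP H1 /forallP H2]|[H1 H2]]; split => //.
- by move=> x y nxy rxy; have /forallP/(_ y) := H2 x; rewrite nxy rxy.
- exact/forallP.
- by apply/forallP => x; apply/forallP => y; apply/implyP => /andP[] /H2.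
Qed.

Lemma chain_mapsP (g : {ffun T -> 'I_N.+1}) :
  reflect ((forall x, 0 < g x) /\ (forall C, is_chain C -> \sum_(x in C) g x <= N))
          (g \in chain_maps).
Proof.
rewrite inE; apply: (iffP andP) => [[/forallP H1 /forallP H2]|[H1 H2]]; split => //.
- by move=> C cC; have /implyP := H2 C; apply.
- exact/forallP.
- by apply/forallP => C; apply/implyP => /H2.
Qed.

Lemma is_chainP (C : {set T}) :
  reflect (forall x y, x \in C -> y \in C -> [|| x == y, R x y | R y x]) (is_chain C).
Proof.
apply: (iffP forallP) => [H x y xC yC|H x].
  by have /forall_inP := implyP (H x) xC; apply.
by apply/implyP => xC; apply/forall_inP => y yC; apply: H.
Qed.

Lemma is_chainS (C D : {set T}) : C \subset D -> is_chain D -> is_chain C.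
Proof.
move=> /subsetP CD /is_chainP H; apply/is_chainP => x y /CD xD /CD yD; exact: H.
Qed.

Lemma top_chain1 x : top_chain x [set x].
Proof.
rewrite /top_chain set11 /=; apply/andP; split.
  by apply/is_chainP => y z; rewrite !inE => /eqP -> /eqP ->; rewrite eqxx.
by apply/forall_inP => z; rewrite inE => /eqP ->.
Qed.

Lemma transferE f x : (transfer f x : nat) = f x - max_below (fun y => f y) x.
Proof. by rewrite ffunE inordK //; have := ltn_ord (f x); lia. Qed.

Section StrictMap.
Variable f : {ffun T -> 'I_N.+1}.
Hypothesis f_strict : f \in strict_maps.

Lemma max_below_lt x : max_below (fun y => f y) x < f x.
Proof.
case/strict_mapsP: f_strict => f_pos f_mono.
have := f_pos x; case: (f x : nat) (f_mono ^~ x) => [//|k] lt_f _.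
by rewrite ltnS; apply/bigmax_leqP => y /andP[nyx ryx]; rewrite -ltnS lt_f.
Qed.

(* The transfer of a strict map telescopes along any chain, read from its top. *)
Lemma sum_transfer_chain (C : {set T}) :
  is_chain C -> \sum_(x in C) transfer f x <= \max_(x in C) f x.
Proof.
case/strict_mapsP: (f_strict) => _ f_mono.
elim: {C}_.+1 {-2}C (ltnSn #|C|) => // k IH C; rewrite ltnS => cardC cC.
have [->|Cn0] := eqVneq C set0; first by rewrite big_set0.
have [t tC tmax] : {t | t \in C & \max_(x in C) f x = f t}.
  by apply: eq_bigmax_cond; rewrite card_gt0.
rewrite (big_setD1 t) //= tmax transferE.
have below_t : \max_(x in C :\ t) f x <= max_below (fun y => f y) t.
  apply/bigmax_leqP => y; rewrite !inE => /andP[nyt yC].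
  apply: leq_bigmax_cond; rewrite nyt /=.
  move/is_chainP: cC => /(_ y t yC tC); rewrite (negbTE nyt) /= => /orP[//|rty].
  have := f_mono t y; rewrite eq_sym nyt => /(_ isT rty).
  have := @leq_bigmax_cond _ (mem C) (fun x => nat_of_ord (f x)) y yC.
  by rewrite tmax leqNgt => /negbTE ->.
have := IH (C :\ t); rewrite (cardsD1 t C) tC add1n in cardC.
move=> /(_ cardC (is_chainS (subsetDl C [set t]) cC)).
have := max_below_lt t; lia.
Qed.

Lemma transfer_chain_maps : transfer f \in chain_maps.
Proof.
apply/chain_mapsP; split.
  by move=> x; rewrite transferE; have := max_below_lt x; lia.
move=> C cC; apply: leq_trans (sum_transfer_chain cC) _.
by apply/bigmax_leqP => x _; rewrite -ltnS.
Qed.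

End StrictMap.

(* By strong induction on [f1 x]: both maps agree below [x], hence have the same
   [max_below] at [x]. *)
Lemma transfer_inj : {in strict_maps &, injective transfer}.
Proof.
move=> f1 f2 f1S f2S E.
suff eq_f : forall k x, (f1 x : nat) <= k -> (f1 x : nat) = f2 x.
  by apply/ffunP => x; apply: val_inj; apply: (eq_f (f1 x)).
case/strict_mapsP: (f1S) => f1_pos f1_mono.
elim=> [|k IH] x; first by rewrite leqn0 => /eqP f1x0; have := f1_pos x; rewrite f1x0.
move=> lek.
have Emax : max_below (fun y => f1 y) x = max_below (fun y => f2 y) x.
  apply: eq_bigr => y /andP[nyx ryx]; apply: IH.
  by rewrite -ltnS; apply: leq_trans (f1_mono y x nyx ryx) lek.
have := congr1 (fun g : {ffun T -> 'I_N.+1} => (g x : nat)) E; rewrite /= !transferE Emax.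
have := max_below_lt f1S x; have := max_below_lt f2S x; rewrite Emax.
set m := max_below _ x; lia.
Qed.

Lemma max_chain_sumP (g : {ffun T -> 'I_N.+1}) x :
  {C | top_chain x C & max_chain_sum g x = \sum_(z in C) (g z : nat)}.
Proof. by apply: eq_bigmax_cond; apply/card_gt0P; exists [set x]; apply: top_chain1. Qed.

Lemma leq_max_chain_sum (g : {ffun T -> 'I_N.+1}) x : g x <= max_chain_sum g x.
Proof.
have -> : (g x : nat) = \sum_(z in [set x]) (g z : nat) by rewrite big_set1.
exact: leq_bigmax_cond (top_chain1 x).
Qed.

(* Any chain topped by [y] extends by [x] to a chain topped by [x]. *)
Lemma max_chain_sum_step (g : {ffun T -> 'I_N.+1}) x y :
  y != x -> R y x -> max_chain_sum g y + g x <= max_chain_sum g x.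
Proof.
move=> nyx ryx; have [C /and3P[cC yC /forall_inP below_y] ->] := max_chain_sumP g y.
have xC : x \notin C.
  apply: contra nyx => /below_y rxy; apply/eqP; apply: Ranti; exact/andP.
rewrite [_ + g x]addnC -(@big_setU1 _ _ _ _ x C (fun z => nat_of_ord (g z))) //.
apply: leq_bigmax_cond.
rewrite /top_chain setU11 /=; apply/andP; split.
  apply/is_chainP => u v; rewrite !inE => /orP[/eqP->|uC] /orP[/eqP->|vC].
  - by rewrite eqxx.
  - by rewrite (Rtrans (below_y v vC) ryx) !orbT.
  - by rewrite (Rtrans (below_y u uC) ryx) orbT.
  - by move/is_chainP: cC; apply.
apply/forall_inP => z; rewrite !inE => /orP[/eqP->|zC]; first exact: Rrefl.
exact: Rtrans (below_y z zC) ryx.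
Qed.

Section ChainMap.
Variable g : {ffun T -> 'I_N.+1}.
Hypothesis g_chain : g \in chain_maps.

Lemma max_chain_sum_le x : max_chain_sum g x <= N.
Proof. by case/chain_mapsP: g_chain => _ H; apply/bigmax_leqP => C /and3P[/H]. Qed.

Lemma untransferE x : (untransfer g x : nat) = max_chain_sum g x.
Proof. by rewrite ffunE inordK // ltnS max_chain_sum_le. Qed.

Lemma max_chain_sum_lt x y : y != x -> R y x -> max_chain_sum g y < max_chain_sum g x.
Proof.
case/chain_mapsP: g_chain => g_pos _ nyx ryx.
have := max_chain_sum_step g nyx ryx; have := g_pos x; lia.
Qed.

Lemma untransfer_strict_maps : untransfer g \in strict_maps.
Proof.
apply/strict_mapsP; split=> [x|x y nxy rxy]; rewrite !untransferE.
  by case/chain_mapsP: g_chain => g_pos _; apply: leq_trans (g_pos x) (leq_max_chain_sum g x).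
exact: max_chain_sum_lt.
Qed.

(* Removing [x] from an optimal chain topped by [x] leaves a chain topped by its
   element [y] of largest [max_chain_sum], and [y] lies below [x]. *)
Lemma max_chain_sum_le_rec x :
  max_chain_sum g x <= g x + max_below (max_chain_sum g) x.
Proof.
have [C /and3P[cC xC /forall_inP below_x] ->] := max_chain_sumP g x.
rewrite (big_setD1 x) //= leq_add2l.
have [->|Cn0] := eqVneq (C :\ x) set0; first by rewrite big_set0.
have [y yCx ymax] : {y | y \in C :\ x & \max_(z in C :\ x) max_chain_sum g z = max_chain_sum g y}.
  by apply: eq_bigmax_cond; rewrite card_gt0.
move: (yCx); rewrite !inE => /andP[nyx yC].
apply: (@leq_trans (max_chain_sum g y)); last by apply: leq_bigmax_cond; rewrite nyx below_x.
apply: leq_bigmax_cond; rewrite /top_chain yCx (is_chainS (subsetDl C [set x]) cC) /=.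
apply/forall_inP => z zCx; have [->|nzy] := eqVneq z y; first exact: Rrefl.
move: (zCx); rewrite !inE => /andP[_ zC].
move/is_chainP: cC => /(_ z y zC yC); rewrite (negbTE nzy) /= => /orP[//|ryz].
have := max_chain_sum_lt (y := y) (x := z); rewrite eq_sym nzy => /(_ isT ryz).
have := @leq_bigmax_cond _ (mem (C :\ x)) (max_chain_sum g) z zCx.
by rewrite ymax leqNgt => /negbTE ->.
Qed.

Lemma max_chain_sum_rec x : max_chain_sum g x = g x + max_below (max_chain_sum g) x.
Proof.
apply/eqP; rewrite eqn_leq max_chain_sum_le_rec /=.
have : max_below (max_chain_sum g) x <= max_chain_sum g x - g x.
  apply/bigmax_leqP => y /andP[nyx ryx]; have := max_chain_sum_step g nyx ryx; lia.
have := leq_max_chain_sum g x; lia.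
Qed.

Lemma untransferK : transfer (untransfer g) = g.
Proof.
apply/ffunP => x; apply: val_inj => /=; rewrite transferE.
have -> : max_below (fun y => untransfer g y) x = max_below (max_chain_sum g) x.
  by apply: eq_bigr => y _; rewrite untransferE.
by rewrite untransferE max_chain_sum_rec addnK.
Qed.

End ChainMap.

Lemma card_strict_maps : #|strict_maps| = #|chain_maps|.
Proof.
apply/eqP; rewrite eqn_leq; apply/andP; split.
  rewrite -(card_in_imset transfer_inj); apply: subset_leq_card.
  by apply/subsetP => g /imsetP[f fS ->]; apply: transfer_chain_maps.
have untransfer_inj : {in chain_maps &, injective untransfer}.
  by move=> g1 g2 g1A g2A E; rewrite -(untransferK g1A) -(untransferK g2A) E.
rewrite -(card_in_imset untransfer_inj); apply: subset_leq_card.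
by apply/subsetP => f /imsetP[g gA ->]; apply: untransfer_strict_maps.
Qed.

End ChainTransfer.

Definition incr_maps n N := [set h : {ffun 'I_n -> 'I_N.+1} | [forall i, 0 < h i] &&
  [forall i : 'I_n, forall j : 'I_n, (i < j) ==> (h i < h j)]].

Lemma incr_mapsP n N (h : {ffun 'I_n -> 'I_N.+1}) :
  reflect ((forall i, 0 < h i) /\ (forall i j : 'I_n, i < j -> h i < h j))
          (h \in incr_maps n N).
Proof.
rewrite inE; apply: (iffP andP) => [[/forallP H1 /forallP H2]|[H1 H2]]; split => //.
- by move=> i j ij; have /forallP/(_ j)/implyP := H2 i; apply.
- exact/forallP.
- by apply/forallP => i; apply/forallP => j; apply/implyP => /H2.
Qed.

Lemma incr_maps_mono n N (h : {ffun 'I_n -> 'I_N.+1}) (i j : 'I_n) :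
  h \in incr_maps n N -> (h i < h j) = (i < j).
Proof.
case/incr_mapsP=> _ h_mono; apply/idP/idP; last exact: h_mono.
by apply: contraTT; rewrite -!leqNgt leq_eqVlt => /predU1P[/ord_inj->//|/h_mono/ltnW].
Qed.

(* Spread a vector of digits [u i < M] into the blocks [[i*M + 1, (i+1)*M]]. *)
Lemma card_incr_maps_ge n M : M ^ n <= #|incr_maps n (n * M)|.
Proof.
have block_le (i : 'I_n) (r : 'I_M) : i * M + r + 1 <= n * M.
  have : i.+1 * M <= n * M by rewrite leq_mul2r ltn_ord orbT.
  by rewrite mulSn; have := ltn_ord r; lia.
pose spread (u : {ffun 'I_n -> 'I_M}) : {ffun 'I_n -> 'I_(n * M).+1} :=
  [ffun i : 'I_n => inord (i * M + u i + 1)].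
have spreadE u i : (spread u i : nat) = i * M + u i + 1.
  by rewrite ffunE inordK // ltnS.
have spread_inj : injective spread.
  move=> u1 u2 /ffunP E; apply/ffunP => i; apply: ord_inj.
  by have := congr1 val (E i); rewrite /= !spreadE; lia.
rewrite -[M in M ^ n]card_ord -[n in _ ^ n]card_ord -card_ffun -(card_imset _ spread_inj).
apply: subset_leq_card; apply/subsetP => h /imsetP[u _ ->].
apply/incr_mapsP; split=> [i|i j ij]; rewrite !spreadE ?addn1 //.
have : i.+1 * M <= j * M by rewrite leq_mul2r ij orbT.
by move: (u i) (u j) => ui uj; rewrite mulSn; have := ltn_ord ui; lia.
Qed.

Lemma card_ord_lt n k : k <= n -> #|[set i : 'I_n | i < k]| = k.
Proof.
move=> kn; have widen_inj : injective (widen_ord kn) by move=> i j [] /ord_inj.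
rewrite -[RHS]card_ord -(card_imset _ widen_inj).
apply: eq_card => i; rewrite inE; apply/idP/imsetP => [ik|[j _ ->]]; last exact: (ltn_ord j).
by exists (Ordinal ik) => //; apply: val_inj.
Qed.

Section LinearExtensions.
Variables (T : finType) (R : rel T) (N : nat).

Definition inj_strict_maps := [set f in strict_maps R N | injectiveb f].

Definition noninj_maps := [set f : {ffun T -> 'I_N.+1} | ~~ injectiveb f].

Definition rank_of (f : {ffun T -> 'I_N.+1}) x := #|[set y | f y < f x]|.

Lemma rank_of_lt (f : {ffun T -> 'I_N.+1}) x y : f x < f y -> rank_of f x < rank_of f y.
Proof.
move=> lt; apply: proper_card; apply/properP; split.
  by apply/subsetP => z; rewrite !inE => /ltn_trans; apply.
by exists x; rewrite !inE ?ltnn.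
Qed.

Lemma rank_of_le (f : {ffun T -> 'I_N.+1}) x y : f x <= f y -> rank_of f x <= rank_of f y.
Proof.
move=> le; apply/subset_leq_card/subsetP => z; rewrite !inE => lt.
exact: leq_trans lt le.
Qed.

Lemma rank_of_lt_card (f : {ffun T -> 'I_N.+1}) x : rank_of f x < #|T|.
Proof.
rewrite -cardsT; apply: proper_card; apply/properP; split; first exact: subsetT.
by exists x; rewrite !inE ?ltnn.
Qed.

Lemma linextP (L : {ffun T -> 'I_#|T|}) :
  reflect (injective L /\ forall x y, R x y -> L x <= L y) (is_linext R L).
Proof.
apply: (iffP andP) => [[/injectiveP H1 /forallP H2]|[H1 H2]]; split => //.
- by move=> x y rxy; have /forallP/(_ y)/implyP := H2 x; apply.
- exact/injectiveP.
- by apply/forallP => x; apply/forallP => y; apply/implyP => /H2.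
Qed.

Lemma linext_bij (L : {ffun T -> 'I_#|T|}) : injective L -> bijective L.
Proof. by move=> Linj; apply: (inj_card_bij Linj); rewrite card_ord. Qed.

Lemma card_linext_below (L : {ffun T -> 'I_#|T|}) x :
  injective L -> #|[set y | L y < L x]| = L x.
Proof.
move=> /linext_bij Lbij.
have -> : [set y | L y < L x] = L @^-1: [set i : 'I_#|T| | i < L x].
  by apply/setP => y; rewrite !inE.
by rewrite on_card_preimset ?card_ord_lt 1?ltnW //; apply: onW_bij.
Qed.

Definition linext_pairs :=
  setX [set L : {ffun T -> 'I_#|T|} | is_linext R L] (incr_maps #|T| N).

Definition compose_pair (p : {ffun T -> 'I_#|T|} * {ffun 'I_#|T| -> 'I_N.+1}) :
  {ffun T -> 'I_N.+1} := [ffun x => p.2 (p.1 x)].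

Lemma compose_pair_inj_strict p : p \in linext_pairs -> compose_pair p \in inj_strict_maps.
Proof.
case: p => L h; rewrite in_setX inE /= => /andP[/linextP[Linj Lle] h_incr].
have h_mono := incr_maps_mono _ _ h_incr.
rewrite inE; apply/andP; split.
  apply/strict_mapsP; split; first by move=> x; rewrite ffunE; case/incr_mapsP: h_incr.
  move=> x y nxy rxy; rewrite !ffunE h_mono ltn_neqAle Lle // andbT.
  by apply: contra nxy => /eqP/ord_inj/Linj ->.
apply/injectiveP => x y; rewrite !ffunE /= => E; apply: Linj.
by apply/ord_inj/eqP; rewrite eqn_leq (leqNgt (L x)) (leqNgt (L y)) -!h_mono E ltnn.
Qed.

Lemma compose_pair_inj : {in linext_pairs &, injective compose_pair}.
Proof.
case=> L h [L' h']; rewrite !in_setX /= => /andP[+ h_incr] /andP[+ h'_incr] E.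
rewrite !inE => /linextP[Linj _] /linextP[L'inj _].
have E_at z : h (L z) = h' (L' z).
  by have := congr1 (fun f : {ffun T -> 'I_N.+1} => f z) E; rewrite !ffunE.
have EL : L = L'.
  apply/ffunP => x; apply: ord_inj.
  rewrite -(card_linext_below x Linj) -(card_linext_below x L'inj).
  apply: eq_card => y; rewrite !inE.
  by rewrite -(incr_maps_mono _ _ h_incr) -(incr_maps_mono _ _ h'_incr) !E_at.
subst L'; have [Linv LK KL] := linext_bij Linj.
by congr (_, _); apply/ffunP => i; rewrite -(KL i) E_at.
Qed.

(* An injective strict map factors through its ranking, which is a linear extension. *)
Lemma inj_strict_maps_compose f : f \in inj_strict_maps -> f \in compose_pair @: linext_pairs.
Proof.
rewrite inE => /andP[/strict_mapsP[f_pos f_mono] /injectiveP finj].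
pose L := [ffun x => Ordinal (rank_of_lt_card f x)].
have LE z : (L z : nat) = rank_of f z by rewrite ffunE.
have f_lt x y : x != y -> (f x < f y) || (f y < f x).
  by move=> nxy; rewrite -neq_ltn; apply: contra nxy => /eqP/ord_inj/finj ->.
have Linj : injective L.
  move=> x y /(congr1 val); rewrite /= !LE => E; apply/eqP; apply: contraT => /f_lt.
  by case/orP => /rank_of_lt; rewrite E ltnn.
have [Linv LK KL] := linext_bij Linj.
pose h := [ffun i => f (Linv i)].
apply/imsetP; exists (L, h); last first.
  by apply/ffunP => x; rewrite /compose_pair [RHS]ffunE /= [RHS]ffunE LK.
rewrite in_setX inE; apply/andP; split.
  apply/linextP; split => // x y rxy; rewrite !LE; apply: rank_of_le.
  by have [->|nxy] := eqVneq x y; last exact: ltnW (f_mono x y nxy rxy).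
apply/incr_mapsP; split=> [i|i j]; rewrite !ffunE // -{1}(KL i) -{1}(KL j) !LE.
by apply: contraTT; rewrite -!leqNgt => /rank_of_le.
Qed.

Lemma card_inj_strict_maps : #|inj_strict_maps| = num_linext R * #|incr_maps #|T| N|.
Proof.
have -> : inj_strict_maps = compose_pair @: linext_pairs.
  apply/setP => f; apply/idP/idP; first exact: inj_strict_maps_compose.
  by case/imsetP => p pD ->; apply: compose_pair_inj_strict.
by rewrite (card_in_imset compose_pair_inj) cardsX.
Qed.

Lemma card_strict_maps_ge : num_linext R * #|incr_maps #|T| N| <= #|strict_maps R N|.
Proof.
rewrite -card_inj_strict_maps; apply/subset_leq_card/subsetP => f.
by rewrite inE => /andP[].
Qed.

Lemma card_strict_maps_le :
  #|strict_maps R N| <= num_linext R * #|incr_maps #|T| N| + #|noninj_maps|.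
Proof.
rewrite -card_inj_strict_maps; apply: leq_trans (leq_card_setU _ _).
apply/subset_leq_card/subsetP => f fS.
by rewrite in_setU [f \in inj_strict_maps]inE [f \in noninj_maps]inE fS; case: injectiveb.
Qed.

End LinearExtensions.

Section NonInjective.
Variables (T : finType) (N : nat).

Definition collision (f : {ffun T -> 'I_N.+1}) :=
  [pick p : T * T | (p.1 != p.2) && (f p.1 == f p.2)].

(* Overwrite [f] at the second point of its collision; the overwritten value is
   recovered from the first point. *)
Definition overwrite_collision (q : {ffun T -> 'I_N.+1} * 'I_N.+1) :=
  if collision q.1 is Some p then Some (p, [ffun z => if z == p.2 then q.2 else q.1 z])
  else None.

Lemma collisionP f : f \in noninj_maps T N ->
  {p | collision f = Some p & (p.1 != p.2) && (f p.1 == f p.2)}.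
Proof.
rewrite inE /collision => ninj; case: pickP => [p Hp|no_coll]; first by exists p.
case/negP: ninj; apply/injectiveP => x y fxy; apply/eqP; apply: contraT => nxy.
by have := no_coll (x, y); rewrite /= nxy fxy eqxx.
Qed.

Lemma card_noninj_maps : #|noninj_maps T N| * N.+1 <= #|T| * #|T| * N.+1 ^ #|T|.
Proof.
have overwrite_inj : {in setX (noninj_maps T N) setT &, injective overwrite_collision}.
  case=> f1 k1 [f2 k2]; rewrite !in_setX !in_setT /= !andbT => f1N f2N.
  have [p E1 /andP[np /eqP e1]] := collisionP f1N.
  have [p2 E2 /andP[_ /eqP e2]] := collisionP f2N.
  rewrite /overwrite_collision /= E1 E2 => -[Ep /ffunP Ef]; subst p2.
  have := Ef p.2; rewrite !ffunE eqxx => <-; congr (_, _); apply/ffunP => z.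
  have := Ef z; rewrite !ffunE; case: eqP => [-> _|//].
  by rewrite -e1 -e2; have := Ef p.1; rewrite !ffunE (negbTE np).
have := card_in_imset overwrite_inj; rewrite cardsX cardsT card_ord => <-.
have -> : #|T| * #|T| * N.+1 ^ #|T| =
          #|[set~ None : option ((T * T) * {ffun T -> 'I_N.+1})]|.
  by rewrite cardsC1 card_option !card_prod card_ffun card_ord.
apply/subset_leq_card/subsetP => _ /imsetP[[f k] /setXP[fN _] ->].
by have [p E _] := collisionP fN; rewrite !inE /overwrite_collision /= E.
Qed.

End NonInjective.

Section Comparability.
Variables (T : finType) (P Q : rel T).
Hypothesis compQP : forall x y, comparable_in Q x y -> comparable_in P x y.

Lemma is_chain_comparable C : is_chain Q C -> is_chain P C.
Proof.
move/is_chainP=> chQ; apply/is_chainP => x y xC yC.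
have [//|nxy] := eqVneq x y.
have := @compQP x y; rewrite /comparable_in nxy /=; apply.
by have := chQ x y xC yC; rewrite (negbTE nxy).
Qed.

Lemma chain_maps_subset N : chain_maps P N \subset chain_maps Q N.
Proof.
apply/subsetP => g /chain_mapsP[g_pos g_sum]; apply/chain_mapsP; split => //.
by move=> C /is_chain_comparable; apply: g_sum.
Qed.

Lemma sum_le_but_one (F : T -> nat) (C : {set T}) c A B :
  (forall v, v \in C -> v != c -> F v <= A) -> F c <= B ->
  \sum_(v in C) F v <= B + #|T| * A.
Proof.
move=> Fle FcB.
have sum_le (D : {set T}) : c \notin D -> D \subset C -> \sum_(v in D) F v <= #|T| * A.
  move=> cD /subsetP DC; apply: (@leq_trans (\sum_(v in D) A)).
    by apply: leq_sum => v vD; apply: Fle (DC v vD) _; apply: contraNneq cD => <-.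
  by rewrite sum_nat_const leq_mul2r max_card orbT.
have [cC|cC] := boolP (c \in C); last by rewrite (leq_trans (sum_le _ cC _)) ?leq_addl.
by rewrite (big_setD1 c cC) leq_add // sum_le ?subsetDl // !inE eqxx.
Qed.

(* Below, [a] and [b] are comparable in [P] but not in [Q]; the witness maps put
   two large values on [a] and [b] (with free high digits) and small values elsewhere.
   A [Q]-chain meets at most one of [a], [b], so its sum is at most [N]; the
   [P]-chain [{a, b}] already exceeds [N]. *)
Variables (a b : T) (K N : nat).
Hypotheses (nab : a != b) (Pab : P a b || P b a) (nQab : ~~ Q a b) (nQba : ~~ Q b a).
Hypothesis NE : N = #|T| * (4 * K).

Definition witness_val (p : {ffun T -> 'I_K} * ('I_#|T| * 'I_#|T|)) v :=
  if v == a then 2 * #|T| * K + p.2.1 * K + p.1 v + 1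
  else if v == b then 2 * #|T| * K + p.2.2 * K + p.1 v + 1
  else p.1 v + 1.

Lemma witness_val_small p v : v != a -> v != b -> witness_val p v <= K.
Proof. by move=> /negbTE va /negbTE vb; rewrite /witness_val va vb addn1 ltn_ord. Qed.

Lemma witness_val_le p v : witness_val p v <= 3 * #|T| * K.
Proof.
have high_le (i : 'I_#|T|) (r : 'I_K) : 2 * #|T| * K + i * K + r + 1 <= 3 * #|T| * K.
  have : i.+1 * K <= #|T| * K by rewrite leq_mul2r ltn_ord orbT.
  by move: (r : nat) (ltn_ord r) => r' lt_r; rewrite mulSn; nia.
rewrite /witness_val; case: eqP => _; first exact: high_le.
case: eqP => _; first exact: high_le.
by have := high_le (Ordinal (ltn_ord p.2.1)) (p.1 v); rewrite /=; lia.
Qed.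

Definition witness p : {ffun T -> 'I_N.+1} := [ffun v => inord (witness_val p v)].

Lemma witnessE p v : (witness p v : nat) = witness_val p v.
Proof.
by rewrite ffunE inordK // ltnS NE; apply: leq_trans (witness_val_le p v) _; nia.
Qed.

Lemma witness_chain_maps p : witness p \in chain_maps Q N.
Proof.
apply/chain_mapsP; split=> [v|C /is_chainP chC].
  by rewrite witnessE /witness_val; case: ifP => _; last case: ifP => _; rewrite addn1.
rewrite (eq_bigr _ (fun v _ => witnessE p v)) NE.
have -> : #|T| * (4 * K) = 3 * #|T| * K + #|T| * K by nia.
have [aC|aC] := boolP (a \in C).
  have bC : b \notin C.
    by apply/negP => bC; have := chC a b aC bC; rewrite (negbTE nab) (negbTE nQab) (negbTE nQba).
  apply: sum_le_but_one (witness_val_le p a) => v vC va; apply: witness_val_small va _.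
  by apply: contraNneq bC => <-.
apply: sum_le_but_one (witness_val_le p b) => v vC; apply: witness_val_small.
by apply: contraNneq aC => <-.
Qed.

Lemma witness_notin_chain_maps p : witness p \notin chain_maps P N.
Proof.
apply/negP => /chain_mapsP[_ /(_ [set a; b])].
have chain_ab : is_chain P [set a; b].
  apply/is_chainP => x y; rewrite !inE => /orP[]/eqP-> /orP[]/eqP->; rewrite ?eqxx //.
    by rewrite Pab orbT.
  by rewrite orbA orbC; case/orP: Pab => ->; rewrite ?orbT.
move/(_ chain_ab); rewrite big_setU1 ?inE //= big_set1 !witnessE.
by rewrite /witness_val eqxx eq_sym (negbTE nab) eqxx NE; nia.
Qed.

Lemma eq_mulnDr_ord K' (x y : nat) (r s : 'I_K') : x * K' + r = y * K' + s -> x = y /\ r = s.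
Proof.
have K'pos : 0 < K' by case: K' r {s} => // - [].
move=> E; have := congr1 (modn^~ K') E; have := congr1 (divn^~ K') E.
by rewrite !divnMDl // !modnMDl !divn_small // !modn_small // !addn0 => -> /ord_inj.
Qed.

Lemma witness_inj : injective witness.
Proof.
case=> u1 [i1 j1] [u2 [i2 j2]] E.
have Ev v : witness_val (u1, (i1, j1)) v = witness_val (u2, (i2, j2)) v by rewrite -!witnessE E.
have := Ev a; rewrite /witness_val /= eqxx => /addIn; rewrite -!addnA.
move=> /addnI/eq_mulnDr_ord[/ord_inj -> ua].
have := Ev b; rewrite /witness_val /= eq_sym (negbTE nab) eqxx => /addIn; rewrite -!addnA.
move=> /addnI/eq_mulnDr_ord[/ord_inj -> ub].
congr (_, _); apply/ffunP => v; apply: ord_inj.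
have [->|va] := eqVneq v a; first by rewrite ua.
have [->|vb] := eqVneq v b; first by rewrite ub.
by have := Ev v; rewrite /witness_val /= (negbTE va) (negbTE vb) => /addIn.
Qed.

Lemma card_chain_maps_gap : #|chain_maps P N| + K ^ #|T| * (#|T| * #|T|) <= #|chain_maps Q N|.
Proof.
have witness_sub : witness @: setT \subset chain_maps Q N :\: chain_maps P N.
  by apply/subsetP => _ /imsetP[p _ ->]; rewrite inE witness_notin_chain_maps witness_chain_maps.
have := subset_leq_card witness_sub; rewrite cardsDS ?chain_maps_subset //.
rewrite card_imset ?cardsT ?card_prod ?card_ffun ?card_ord; last exact: witness_inj.
by have := subset_leq_card (chain_maps_subset N); lia.
Qed.

End Comparability.

(* [scale n] is the digit base [K] of the witness family and [height n] the
   dilation [N] of the chain polytope used for a ground set of size [n]. *)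
Definition scale n := n * n * (5 * n) ^ n.

Definition height n := n * (4 * scale n).

Lemma scale_gt0 n : 0 < n -> 0 < scale n.
Proof. by move=> n_gt0; rewrite /scale !muln_gt0 expn_gt0 muln_gt0 n_gt0. Qed.

Lemma noninj_bound_le n : n * n * (height n).+1 ^ n <= scale n * scale n ^ n.
Proof.
have [->|n_gt0] := posnP n; first by rewrite !mul0n.
have height_le : (height n).+1 <= 5 * n * scale n.
  by have := scale_gt0 n_gt0; rewrite /height; nia.
apply: (@leq_trans (n * n * (5 * n * scale n) ^ n)).
  by rewrite leq_mul2l leq_exp2r ?height_le ?orbT.
by rewrite expnMn mulnA.
Qed.

Lemma noninj_bound_lt_incr n : n * n * (height n).+1 ^ n < (4 * scale n) ^ n * (height n).+1.
Proof.
have [->|n_gt0] := posnP n; first by rewrite !mul0n.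
apply: leq_ltn_trans (noninj_bound_le n) _.
have Kn_gt0 : 0 < scale n ^ n by rewrite expn_gt0 scale_gt0.
rewrite mulnC; apply: leq_trans (_ : scale n ^ n * (height n).+1 <= _).
  by rewrite ltn_pmul2l // ltnS /height mulnA leq_pmull // muln_gt0 n_gt0.
by rewrite leq_mul2r leq_exp2r ?leq_pmull ?orbT.
Qed.

Lemma noninj_bound_lt_gap n : 0 < n ->
  n * n * (height n).+1 ^ n < scale n ^ n * (n * n) * (height n).+1.
Proof.
move=> n_gt0; apply: leq_ltn_trans (noninj_bound_le n) _.
rewrite [scale n * _]mulnC -mulnA ltn_pmul2l ?expn_gt0 ?scale_gt0 //.
apply: leq_trans (_ : (height n).+1 <= _); last by rewrite leq_pmull // muln_gt0 n_gt0.
by rewrite ltnS /height mulnA leq_pmull // muln_gt0 n_gt0.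
Qed.

Lemma leq_of_mul_leq_add m k c r : r < c -> m * c <= k * c + r -> m <= k.
Proof. by move=> r_lt_c; apply: contraTT; rewrite -!ltnNge; nia. Qed.

Lemma ltn_of_mul_add_leq m k c r d : r < d -> m * c + d <= k * c + r -> m < k.
Proof. by move=> r_lt_d; apply: contraTT; rewrite -leqNgt -ltnNge; nia. Qed.

Theorem mainTheorem8 (T : finType) (P Q : rel T) :
  is_partial_order P -> is_partial_order Q ->
  (forall x y : T, comparable_in Q x y -> comparable_in P x y) ->
  num_linext P <= num_linext Q /\
  ((exists x y : T, comparable_in P x y && ~~ comparable_in Q x y) ->
   num_linext P < num_linext Q).
Proof.
move=> [Pr [Pa Pt]] [Qr [Qa Qt]] compQP.
set n := #|T|; set N := height n.
set c := #|incr_maps n N|; set r := #|noninj_maps T N|.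
have ePc : num_linext P * c <= #|chain_maps P N|.
  by rewrite -(card_strict_maps Pr Pa Pt); apply: card_strict_maps_ge.
have eQc : #|chain_maps Q N| <= num_linext Q * c + r.
  by rewrite -(card_strict_maps Qr Qa Qt); apply: card_strict_maps_le.
have r_lt (d : nat) : n * n * N.+1 ^ n < d * N.+1 -> r < d.
  by move=> lt; rewrite -(ltn_pmul2r (ltn0Sn N)); apply: leq_ltn_trans (card_noninj_maps T N) lt.
split.
  apply: (leq_of_mul_leq_add (r_lt c _)); last first.
    exact: leq_trans ePc (leq_trans (subset_leq_card (chain_maps_subset compQP N)) eQc).
  by apply: leq_trans (noninj_bound_lt_incr n) _; rewrite leq_mul2r card_incr_maps_ge orbT.
case=> x [y /andP[/andP[nxy Pxy]]]; rewrite /comparable_in nxy negb_or => /andP[nQxy nQyx].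
have n_gt0 : 0 < n by apply/card_gt0P; exists x.
apply: (ltn_of_mul_add_leq (r_lt _ (noninj_bound_lt_gap n_gt0))).
have gap := card_chain_maps_gap compQP nxy Pxy nQxy nQyx (erefl N).
exact: leq_trans (leq_add ePc (leqnn _)) (leq_trans gap eQc).
Qed.
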